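(* Let $n\ge 2$ be an integer and let $c,\Delta x,\alpha,q_1,q_2,r,\sigma_m,\sigma_d>0$. Define $$\Pi_1=\frac{\alpha^2}{\Delta x^2},\quad \Pi_2=\frac{c^2q_1^2}{q_2^2\Delta x^2},\quad \Pi_3=\frac{\Delta x^2 r}{c^2q_1},\quad \Pi_4=\frac{\Delta x^2\sigma_d}{c^2\sigma_m}.$$ Let $\mathbb{D}^2$ be the $n\times n$ circulant matrix with first row $(-2,1,0,\ldots,0,1)$, $A=\begin{bmatrix}0&I\\ \mathbb{D}^2&0\end{bmatrix}$, $B=\begin{bmatrix}0\\ I\end{bmatrix}$, $C=\begin{bmatrix}\Pi_4 I&0\end{bmatrix}$. Let $K=\begin{bmatrix}K_1&K_2\end{bmatrix}$ ($K_1,K_2\in\mathbb{R}^{n\times n}$) be the optimal LQR gain for the problem of minimizing $\int_0^\infty \boldsymbol{\Phi}^T\begin{bmatrix}I-\Pi_1\mathbb{D}^2&0\\0&\Pi_2I\end{bmatrix}\boldsymbol{\Phi}+\Pi_3^{-2}\boldsymbol{\omega}^T\boldsymbol{\omega}\,d\tau$ subject to $\frac{d}{d\tau}\boldsymbol{\Phi}=A\boldsymbol{\Phi}+B\boldsymbol{\omega}$, and let $L=\begin{bmatrix}L_1\\ L_2\end{bmatrix}$ ($L_1,L_2\in\mathbb{R}^{n\times n}$) be the optimal Kalman filter gain for the system $\frac{d}{d\tau}\boldsymbol{\Psi}=A\boldsymbol{\Psi}+B\boldsymbol{\rho}$, $\boldsymbol{\gamma}=C\boldsymbol{\Psi}+\boldsymbol{\eta}$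 with cost $\int_0^\infty\boldsymbol{\eta}^T(I-\Pi_1\mathbb{D}^2)\boldsymbol{\eta}+\boldsymbol{\rho}^T\boldsymbol{\rho}\,d\tau$. The corresponding (nondimensional, discretized) LQG controller is $\frac{d}{d\tau}\tilde{\boldsymbol{\Phi}}=(A-LC)\tilde{\boldsymbol{\Phi}}+B\boldsymbol{\omega}+L\boldsymbol{\gamma}$, $\boldsymbol{\omega}=-K\tilde{\boldsymbol{\Phi}}$. If $q_1=\sigma_m$, $r=\sigma_d$, and $\Pi_1=\frac{2}{\Pi_4}$, then this LQG controller is completely decentralized, i.e. $K_1,K_2,L_1,L_2$ are all diagonal matrices.
   Context: This is the spatial discretization (with $n$ equispaced points, spacing $\Delta x$, periodic boundary conditions) and nondimensionalization of the LQG problem for the wave equation $\partial_t^2p=c^2\partial_x^2p+u+d$, $y=p+m$ on a circle, with LQR cost weights $1/q_1^2$ (on $p$ in a Sobolev-type norm with parameter $\alpha$), $1/q_2^2$ (on $\partial_tp$), $1/r^2$ (on $u$), and Kalman filter cost weights $1/\sigma_m^2$ (on $m$, Sobolev-type norm with parameter $\alpha$), $1/\sigma_d^2$ (on $d$). The optimal LQR gain for cost $\int\boldsymbol{\Phi}^TQ\boldsymbol{\Phi}+\boldsymbol{\omega}^TR\boldsymbol{\omega}$ is $K=R^{-1}B^TP$ with $P$ the symmetric positive definite stabilizing solution of $PA+A^TP-PBR^{-1}B^TP+Q=0$; the optimal Kalman gain for cost $\int\boldsymbol{\eta}^TW\boldsymbol{\eta}+\boldsymbol{\rho}^T\boldsymbol{\rho}$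 is $L=SC^TW$ with $S$ the symmetric positive definite stabilizing solution of $AS+SA^T+BB^T-SC^TWCS=0$. Gains are called completely decentralized when their $n\times n$ blocks are diagonal (so computation at spatial location $i$ needs only data at location $i$). *)

From HB Require Import structures.
From mathcomp Require Import all_boot all_order all_algebra.
From mathcomp Require Import complex.
From mathcomp Require Import reals.
Set Implicit Arguments. Unset Strict Implicit. Unset Printing Implicit Defensive.
Import Order.TTheory GRing.Theory Num.Theory.
Local Open Scope ring_scope.

Section WaveLQG.
Variable R : realType.

Definition D2 (n : nat) : 'M[R]_n :=
  \matrix_(i < n, j < n)
    ((((i.+1 %% n)%N == j) %:R) + (((j.+1 %% n)%N == i) %:R) - 2 * ((i == j)%:R)).

Definition Amat (n : nat) : 'M[R]_(n + n) := block_mx 0 1%:M (D2 n) 0.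
Definition Bmat (n : nat) : 'M[R]_(n + n, n) := col_mx 0 1%:M.
Definition Cmat (n : nat) (Pi4 : R) : 'M[R]_(n, n + n) := row_mx (Pi4%:M) 0.

Definition hurwitz (m : nat) (M : 'M[R]_m) : Prop :=
  forall (lam : R[i]) (v : 'cV[R[i]]_m),
    v != 0 -> map_mx (fun x => x%:C%C) M *m v = lam *: v -> complex.Re lam < 0.

Definition pos_def (m : nat) (P : 'M[R]_m) : Prop :=
  P^T = P /\ forall x : 'cV[R]_m, x != 0 -> 0 < (x^T *m P *m x) 0 0.

Definition lqr_are_sol (m k : nat) (A : 'M[R]_m) (B : 'M[R]_(m, k))
  (Q : 'M[R]_m) (Rw : 'M[R]_k) (P : 'M[R]_m) : Prop :=
  [/\ pos_def P,
      P *m A + A^T *m P - P *m B *m invmx Rw *m B^T *m P + Q = 0 &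
      hurwitz (A - B *m invmx Rw *m B^T *m P)].

Definition lqr_gain (m k : nat) (B : 'M[R]_(m, k)) (Rw : 'M[R]_k) (P : 'M[R]_m)
  : 'M[R]_(k, m) := invmx Rw *m B^T *m P.

Definition kalman_are_sol (m k p : nat) (A : 'M[R]_m) (B : 'M[R]_(m, k))
  (C : 'M[R]_(p, m)) (W : 'M[R]_p) (S : 'M[R]_m) : Prop :=
  [/\ pos_def S,
      A *m S + S *m A^T + B *m B^T - S *m C^T *m W *m C *m S = 0 &
      hurwitz (A - S *m C^T *m W *m C)].

Definition kalman_gain (m p : nat) (C : 'M[R]_(p, m)) (W : 'M[R]_p) (S : 'M[R]_m)
  : 'M[R]_(m, p) := S *m C^T *m W.

Definition diagonal (n : nat) (M : 'M[R]_n) : Prop :=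
  forall i j : 'I_n, i != j -> M i j = 0.

End WaveLQG.

From HB Require Import structures.
From mathcomp Require Import all_boot all_order all_algebra.
From mathcomp Require Import complex.
From mathcomp Require Import reals.
From mathcomp Require Import ring lra.
Set Implicit Arguments. Unset Strict Implicit. Unset Printing Implicit Defensive.
Import Order.TTheory GRing.Theory Num.Theory.
Local Open Scope ring_scope.

(* Every matrix in sight is built from the periodic Laplacian D2, so under the
   matching conditions q1 = sm, r = sd, Pi1 = 2 / Pi4 both algebraic Riccati
   equations can be solved in closed form by matrices whose blocks are
   polynomials in D2 and (1 - Pi1 D2)^-1; the resulting gains have scalar
   blocks, K = [Pi3; k] and L = [sqrt Pi1; 1].  These closed-form solutions are
   stabilizing because D2 = -(E E^T) is negative semidefinite: every
   closed-loop eigenvalue lam satisfies lam^2 + b lam + a = mu for an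
   eigenvalue mu <= 0 of D2 and some a, b > 0, forcing Re lam < 0.  Finally a
   stabilizing solution is unique, since the difference of two of them solves
   a Sylvester equation whose coefficients have disjoint spectra. *)

Local Notation cplx M := (map_mx (fun x => x%:C%C) M).

Section Eigenvalues.
Variable F : fieldType.

Lemma eigenvalueE m (G : 'M[F]_m) a : eigenvalue G a = (G - a%:M \notin unitmx).
Proof. by rewrite /eigenvalue /eigenspace /= kermx_eq0 row_free_unit. Qed.

Lemma eigenvalue_trmx m (G : 'M[F]_m) a : eigenvalue G^T a = eigenvalue G a.
Proof. by rewrite !eigenvalueE -unitmx_tr linearB /= trmxK tr_scalar_mx. Qed.

Lemma eigenvalueN m (G : 'M[F]_m) a : eigenvalue (- G) a = eigenvalue G (- a).
Proof.
apply/eigenvalueP/eigenvalueP => -[v hv v0]; exists v => //.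
  by rewrite scaleNr -hv mulmxN opprK.
by rewrite mulmxN hv scaleNr opprK.
Qed.

End Eigenvalues.

(* Sylvester: if U and V have disjoint spectra then U X = X V forces X = 0,
   because horner_mx U (char_poly V) is invertible and annihilates X. *)
Lemma sylvester_eq0 (F : closedFieldType) m (U V X : 'M[F]_m) :
  (forall a, eigenvalue V a -> ~~ eigenvalue U a) -> U *m X = X *m V -> X = 0.
Proof.
case: m U V X => [|m] U V X disjUV UXV; first by apply/matrixP => [[]].
have hornerUX p : horner_mx U p *m X = X *m horner_mx V p.
  elim/poly_ind: p => [|p c IH]; first by rewrite !rmorph0 mul0mx mulmx0.
  rewrite !rmorphD !rmorphM /= !horner_mx_X !horner_mx_C -!mulmxE.
  by rewrite !mulmxDl !mulmxDr -mulmxA UXV mulmxA IH -!mulmxA scalar_mxC.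
have [r charVE] := closed_field_poly_normal (char_poly V).
rewrite (monicP (char_poly_monic V)) scale1r in charVE.
have unit_charU : horner_mx U (char_poly V) \in unitmx.
  have eigV : all (eigenvalue V) r.
    by apply/allP => z rz; rewrite eigenvalue_root_char charVE root_prod_XsubC.
  rewrite charVE rmorph_prod; elim: r {charVE} eigV => [|z r IH] /=.
    by rewrite big_nil unitmx1.
  case/andP => eigVz /IH unit_r; rewrite big_cons -mulmxE unitmx_mul unit_r andbT.
  rewrite rmorphB /= horner_mx_X horner_mx_C -[_ \in _]negbK -eigenvalueE.
  exact: disjUV.
have := hornerUX (char_poly V); rewrite Cayley_Hamilton mulmx0.
by move=> charUX0; rewrite -(mulKmx unit_charU X) charUX0 mulmx0.
Qed.

Section GramSpectrum.
Variable R : rcfType.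

Definition cnorm2 n (v : 'rV[R[i]]_n) : R[i] := (v *m (map_mx conjc v)^T) 0 0.

Lemma cnorm2_ge0 n (v : 'rV[R[i]]_n) : 0 <= cnorm2 v.
Proof.
by rewrite /cnorm2 mxE; apply: sumr_ge0 => i _; rewrite !mxE; apply: mulcJ_ge0.
Qed.

Lemma cnorm2_gt0 n (v : 'rV[R[i]]_n) : v != 0 -> 0 < cnorm2 v.
Proof.
move=> v0; rewrite lt_def cnorm2_ge0 andbT; apply: contraNN v0.
rewrite /cnorm2 mxE psumr_eq0 => [/allP v0|i _]; last by rewrite !mxE mulcJ_ge0.
apply/eqP/matrixP => i j; rewrite ord1 !mxE.
by have := v0 j (mem_index_enum j); rewrite !mxE /= mulf_eq0 conjc_eq0 orbb => /eqP.
Qed.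

(* The eigenvalue equation gives mu |w|^2 = - |w E|^2. *)
Lemma gram_eigenvalue_le0 n k (E : 'M[R]_(n, k)) mu :
  eigenvalue (cplx (- (E *m E^T))) mu -> mu <= 0.
Proof.
case/eigenvalueP => w hw w0; set cE := cplx E.
have gramE : cplx (- (E *m E^T)) = - (cE *m cE^T).
  by rewrite map_mxN map_mxM map_trmx.
have conjE : map_mx conjc (w *m cE) = map_mx conjc w *m cE.
  rewrite map_mxM; congr (_ *m _).
  by apply/matrixP => i j; rewrite !mxE; apply: conjc_real.
have muE : mu * cnorm2 w = - cnorm2 (w *m cE).
  transitivity ((w *m cplx (- (E *m E^T)) *m (map_mx conjc w)^T) 0 0).
    by rewrite hw -scalemxAl mxE.
  by rewrite gramE /cnorm2 conjE mulmxN mulNmx mxE trmx_mul !mulmxA.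
have : mu * cnorm2 w <= 0 by rewrite muE oppr_le0 cnorm2_ge0.
by rewrite pmulr_lle0 ?cnorm2_gt0.
Qed.

Lemma Re_lt0_of_char_le0 (a b : R) (lam : R[i]) : 0 < a -> 0 < b ->
  lam * (lam + b%:C%C) + a%:C%C <= 0 -> complex.Re lam < 0.
Proof.
case: lam => x y /= a_gt0 b_gt0; rewrite lecE /= => /andP [/eqP Im0 Re_le0].
have : y * (2 * x + b) = 0 by rewrite Im0; ring.
by move/eqP; rewrite mulf_eq0 => /orP [/eqP y0|/eqP]; [rewrite y0 in Re_le0|]; nra.
Qed.

End GramSpectrum.

Section Hurwitz.
Variable R : realType.

Lemma hurwitzE m (M : 'M[R]_m) :
  hurwitz M <-> forall a, eigenvalue (cplx M) a -> complex.Re a < 0.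
Proof.
split => [hurM a | eigM a v v0 hv].
  rewrite -eigenvalue_trmx => /eigenvalueP [v hv v0].
  apply: (hurM a v^T); first by rewrite trmx_eq0.
  by rewrite -[cplx M]trmxK -trmx_mul hv linearZ.
apply: eigM; rewrite -eigenvalue_trmx; apply/eigenvalueP.
by exists v^T; rewrite ?trmx_eq0 // -trmx_mul hv linearZ.
Qed.

Lemma hurwitz_trmx m (M : 'M[R]_m) : hurwitz M^T <-> hurwitz M.
Proof.
rewrite !hurwitzE -map_trmx.
by split => eigM a; [rewrite -eigenvalue_trmx|rewrite eigenvalue_trmx]; apply: eigM.
Qed.

Section DampedOscillator.
Variables (n : nat) (D : 'M[R]_n) (a b : R).
Hypotheses (eigD_le0 : forall mu, eigenvalue (cplx D) mu -> mu <= 0)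
  (a_gt0 : 0 < a) (b_gt0 : 0 < b).

Lemma hurwitz_damped_oscillator : hurwitz (block_mx 0 1%:M (D - a%:M) (- b)%:M).
Proof.
apply/hurwitzE => lam /eigenvalueP [v hv v0].
move: hv v0; rewrite map_block_mx map_mx0 map_mx1 map_mxB !map_scalar_mx.
rewrite -(hsubmxK v); set u := lsubmx v; set w := rsubmx v.
rewrite mul_row_block scale_row_mx => /eq_row_mx [hu hw] v0.
rewrite mulmx0 add0r in hu; rewrite mulmx1 in hw.
have uE : u = (lam + b%:C%C) *: w.
  by rewrite scalerDl -hw mul_mx_scalar raddfN /= scaleNr addrNK.
have w0 : w != 0 by apply: contraNneq v0 => w0; rewrite uE w0 scaler0 row_mx0.
apply: (Re_lt0_of_char_le0 a_gt0 b_gt0); apply/eigD_le0/eigenvalueP.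
exists w => //; move: hu; rewrite uE mulmxBr mul_mx_scalar scalerA => /eqP.
by rewrite subr_eq => /eqP ->; rewrite scalerDl.
Qed.

Lemma hurwitz_damped_oscillator_dual : hurwitz (block_mx (- b)%:M 1%:M (D - a%:M) 0).
Proof.
apply/hurwitzE => lam /eigenvalueP [v hv v0].
move: hv v0; rewrite map_block_mx map_mx0 map_mx1 map_mxB !map_scalar_mx.
rewrite -(hsubmxK v); set u := lsubmx v; set w := rsubmx v.
rewrite mul_row_block scale_row_mx => /eq_row_mx [hu hw] v0.
rewrite mulmx0 addr0 mulmx1 in hw.
have w0 : w != 0 by apply: contraNneq v0 => w0; rewrite hw w0 scaler0 row_mx0.
apply: (Re_lt0_of_char_le0 a_gt0 b_gt0); apply/eigD_le0/eigenvalueP.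
exists w => //; move: hu; rewrite hw mulmxBr !mul_mx_scalar raddfN /= scalerA.
move=> hu; have -> : w *m cplx D =
    (lam * lam) *: w + b%:C%C *: (lam *: w) + a%:C%C *: w.
  by rewrite -hu scaleNr [_ + b%:C%C *: _]addrC addNKr subrK.
by rewrite !scalerA -!scalerDl mulrC.
Qed.

End DampedOscillator.

(* The spectra of U and -V lie in Re < 0 and Re > 0, so they are disjoint. *)
Lemma hurwitz_sylvester_eq0 m (U V X : 'M[R]_m) :
  hurwitz U -> hurwitz V -> U *m X + X *m V = 0 -> X = 0.
Proof.
move=> /hurwitzE hurU /hurwitzE hurV UXV0.
apply/eqP; rewrite -(map_mx_eq0 (real_complex R)); apply/eqP.
apply: (sylvester_eq0 (V := - cplx V)).
  move=> a; rewrite eigenvalueN => /hurV; apply: contraTN => /hurU.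
  by case: a => x y /=; lra.
rewrite -map_mxM mulmxN -map_mxM -map_mxN; congr (map_mx _ _).
by apply/eqP; rewrite -subr_eq0 opprK UXV0.
Qed.

Definition riccati m (A G Q P : 'M[R]_m) := P *m A + A^T *m P - P *m G *m P + Q.

Definition dual_riccati m (A H N S : 'M[R]_m) := A *m S + S *m A^T + N - S *m H *m S.

Lemma riccatiB m (A G Q P P' : 'M[R]_m) : P^T = P -> G^T = G ->
  riccati A G Q P - riccati A G Q P' =
  (A - G *m P)^T *m (P - P') + (P - P') *m (A - G *m P').
Proof.
move=> symP symG; rewrite /riccati [(A - _)^T]linearB /= trmx_mul symP symG.
rewrite !mulmxBl !mulmxBr !mulmxA.
move: (A^T *m P) (A^T *m P') (P *m G *m P) (P *m G *m P') (P *m A) (P' *m A)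
  (P' *m G *m P) (P' *m G *m P') Q => a b c d e f g h q.
by apply/matrixP => i j; rewrite !mxE; ring.
Qed.

Lemma dual_riccatiB m (A H N S S' : 'M[R]_m) : S^T = S -> H^T = H ->
  dual_riccati A H N S - dual_riccati A H N S' =
  (A - S' *m H) *m (S - S') + (S - S') *m (A - S *m H)^T.
Proof.
move=> symS symH; rewrite /dual_riccati [(A - _)^T]linearB /= trmx_mul symS symH.
rewrite !mulmxBl !mulmxBr !mulmxA.
move: (A *m S) (A *m S') (S' *m H *m S) (S' *m H *m S') (S *m A^T) (S' *m A^T)
  (S *m H *m S) N => a b c d e f g q.
by apply/matrixP => i j; rewrite !mxE; ring.
Qed.

Lemma riccati_unique m (A G Q P P' : 'M[R]_m) : P^T = P -> G^T = G ->
  riccati A G Q P = 0 -> riccati A G Q P' = 0 ->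
  hurwitz (A - G *m P) -> hurwitz (A - G *m P') -> P = P'.
Proof.
move=> symP symG P0 P'0 /hurwitz_trmx hurP hurP'; apply/eqP; rewrite -subr_eq0.
apply/eqP/(hurwitz_sylvester_eq0 hurP hurP').
by rewrite -(@riccatiB _ A G Q) // P0 P'0 subrr.
Qed.

Lemma dual_riccati_unique m (A H N S S' : 'M[R]_m) : S^T = S -> H^T = H ->
  dual_riccati A H N S = 0 -> dual_riccati A H N S' = 0 ->
  hurwitz (A - S *m H) -> hurwitz (A - S' *m H) -> S = S'.
Proof.
move=> symS symH S0 S'0 /hurwitz_trmx hurS hurS'; apply/eqP; rewrite -subr_eq0.
apply/eqP/(hurwitz_sylvester_eq0 hurS' hurS).
by rewrite -(@dual_riccatiB _ A H N) // S0 S'0 subrr.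
Qed.

End Hurwitz.

Section Wave.
Variable R : realType.

Definition cyclic_shift_mx n : 'M[R]_n := \matrix_(i < n, j < n) ((i.+1 %% n)%N == j)%:R.

Lemma cyclic_shift_mx_orthogonal n :
  cyclic_shift_mx n *m (cyclic_shift_mx n)^T = 1%:M.
Proof.
apply/matrixP => i j; rewrite !mxE.
have n_gt0 : (0 < n)%N by case: n i {j} => [[]|].
pose k := Ordinal (ltn_pmod i.+1 n_gt0).
rewrite (bigD1 k) //= big1 => [|l /negbTE kl]; last first.
  by rewrite !mxE -val_eqE /= in kl *; rewrite eq_sym kl mul0r.
rewrite !mxE eqxx mul1r addr0 /= -[j.+1]addn1 -[i.+1]addn1 eqn_modDr.
by rewrite !modn_small ?ltn_ord // eq_sym.
Qed.

Lemma D2_gram n : D2 R n =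
  - ((1%:M - cyclic_shift_mx n) *m (1%:M - cyclic_shift_mx n)^T).
Proof.
rewrite linearB /= trmx1 mulmxBl !mulmxBr !mul1mx mulmx1 cyclic_shift_mx_orthogonal.
apply/matrixP => i j; rewrite !mxE.
move: ((i.+1 %% n)%N == j)%:R ((j.+1 %% n)%N == i)%:R (i == j)%:R => a b c.
by rewrite mulr2n !opprB; ring.
Qed.

Lemma tr_D2 n : (D2 R n)^T = D2 R n.
Proof. by rewrite D2_gram linearN /= trmx_mul trmxK. Qed.

Lemma D2_eigenvalue_le0 n mu : eigenvalue (cplx (D2 R n)) mu -> mu <= 0.
Proof. by rewrite D2_gram; apply: gram_eigenvalue_le0. Qed.

Lemma unitmx_1_subD2 n (c : R) : 0 < c -> 1%:M - c *: D2 R n \in unitmx.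
Proof.
move=> c_gt0; have : ~~ eigenvalue (D2 R n) c^-1.
  rewrite -(eigenvalue_map (real_complex R)); apply/negP => /D2_eigenvalue_le0.
  by rewrite lecE /= eqxx /= leNgt invr_gt0 c_gt0.
rewrite eigenvalueE negbK.
have -> : 1%:M - c *: D2 R n = (- c) *: (D2 R n - c^-1%:M).
  by rewrite scalerBr scale_scalar_mx mulNr mulfV ?gt_eqF // scaleNr raddfN opprK addrC.
by rewrite unitmxZ // unitfE oppr_eq0 gt_eqF.
Qed.

Lemma diagonal_scalar_mx n (a : R) : diagonal (a%:M : 'M[R]_n).
Proof. by move=> i j /negbTE ij; rewrite mxE ij mulr0n. Qed.

End Wave.

Section WaveLQR.
Variables (R : realType) (n : nat).

(* The ansatz P = [[x - y D2, z], [z, y]] with scalars x, y, z turns the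
   Riccati equation into scalar equations; p = Pi3 and k = sqrt (p^2 Pi2 + 2 p)
   then give K = [p; k]. *)
Definition wave_lqr_sol (p k : R) : 'M[R]_(n + n) :=
  block_mx ((k / p)%:M - (k / p ^+ 2) *: D2 R n) p^-1%:M p^-1%:M (k / p ^+ 2)%:M.

Lemma riccati_wave_lqr_sol (Pi1 Pi2 p k : R) :
  p != 0 -> Pi1 = 2 / p -> k ^+ 2 = p ^+ 2 * Pi2 + 2 * p ->
  riccati (Amat R n) (block_mx 0 0 0 (p ^+ 2)%:M)
    (block_mx (1%:M - Pi1 *: D2 R n) 0 0 Pi2%:M) (wave_lqr_sol p k) = 0.
Proof.
move=> p0 -> kE; have -> : Pi2 = (k ^+ 2 - 2 * p) / p ^+ 2 by rewrite kE; field.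
rewrite /riccati /wave_lqr_sol /Amat tr_block_mx !trmx0 trmx1 tr_D2.
rewrite !mulmx_block !mul0mx !mulmx0 !mul1mx !mulmx1 !mul_mx_scalar !mul_scalar_mx.
rewrite !opp_block_mx !add_block_mx ?(addr0, add0r, mul0mx, scaler0) -block_mx0.
move: (D2 R n) => D; congr block_mx; apply/matrixP => i j; rewrite !mxE.
all: by case: (i == j); rewrite ?mulr1n ?mulr0n; field.
Qed.

Lemma wave_lqr_closed_loop (p k : R) : p != 0 ->
  Amat R n - block_mx 0 0 0 (p ^+ 2)%:M *m wave_lqr_sol p k =
  block_mx 0 1%:M (D2 R n - p%:M) (- k)%:M.
Proof.
move=> p0; rewrite /Amat /wave_lqr_sol mulmx_block !mul0mx !add0r.
rewrite -!scalar_mxM !opp_block_mx !add_block_mx !oppr0 !addr0 -!raddfN /=.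
by rewrite add0r expr2 mulfK // [p * p * _]mulrC divfK // mulf_neq0.
Qed.

Lemma wave_lqr_gain (Pi1 Pi2 Pi3 : R) (P : 'M[R]_(n + n)) :
  0 < Pi2 -> 0 < Pi3 -> Pi1 = 2 / Pi3 ->
  lqr_are_sol (Amat R n) (Bmat R n) (block_mx (1%:M - Pi1 *: D2 R n) 0 0 Pi2%:M)
    (Pi3 ^- 2)%:M P ->
  lqr_gain (Bmat R n) (Pi3 ^- 2)%:M P =
  row_mx Pi3%:M (Num.sqrt (Pi3 ^+ 2 * Pi2 + 2 * Pi3))%:M.
Proof.
move=> Pi2_gt0 Pi3_gt0 Pi1E [[symP _] P0 hurP]; set k := Num.sqrt _.
have Pi3_neq0 : Pi3 != 0 by rewrite gt_eqF.
have kE : k ^+ 2 = Pi3 ^+ 2 * Pi2 + 2 * Pi3.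
  by rewrite sqr_sqrtr // ltW // addr_gt0 ?mulr_gt0 ?exprn_gt0.
have k_gt0 : 0 < k by rewrite sqrtr_gt0 addr_gt0 ?mulr_gt0 ?exprn_gt0.
have invRw : invmx (Pi3 ^- 2)%:M = (Pi3 ^+ 2)%:M :> 'M[R]_n.
  by rewrite invmx_scalar invrK.
pose G := Bmat R n *m invmx (Pi3 ^- 2)%:M *m (Bmat R n)^T.
have GE : G = block_mx 0 0 0 (Pi3 ^+ 2)%:M.
  rewrite /G invRw /Bmat tr_col_mx trmx0 trmx1 mul_col_mx mul0mx mul1mx.
  by rewrite mul_col_row !mul0mx !mulmx0 mulmx1.
have -> : P = wave_lqr_sol Pi3 k.
  apply: (@riccati_unique R _ (Amat R n) G
    (block_mx (1%:M - Pi1 *: D2 R n) 0 0 Pi2%:M) _ _ symP).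
  - by rewrite GE tr_block_mx !trmx0 tr_scalar_mx.
  - by rewrite /riccati /G !mulmxA.
  - by rewrite GE; apply: riccati_wave_lqr_sol.
  - exact: hurP.
  rewrite GE wave_lqr_closed_loop //.
  by apply: hurwitz_damped_oscillator => //; apply: D2_eigenvalue_le0.
rewrite /lqr_gain invRw /Bmat tr_col_mx trmx0 trmx1 mul_mx_row mulmx0 mulmx1.
rewrite /wave_lqr_sol mul_row_block !mul0mx !add0r -!scalar_mxM.
by congr (row_mx _%:M _%:M); field.
Qed.

End WaveLQR.

Section WaveKalman.
Variables (R : realType) (n : nat) (s : R).
Hypothesis s_gt0 : 0 < s.

(* s stands for sqrt Pi1 and p for Pi4 = 2 / s^2. *)
Local Notation p := (2 / s ^+ 2).
Local Notation W := (1%:M - s ^+ 2 *: D2 R n).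
Local Notation Wi := (invmx W).

(* The ansatz L = [l1; l2] with scalars l1, l2 makes the first block column of
   S equal to [l1; l2] W^-1 / p; the Riccati equation then forces l1 = s,
   l2 = 1 and determines the last block. *)
Definition wave_kalman_sol : 'M[R]_(n + n) :=
  block_mx ((s / p) *: Wi) (p^-1 *: Wi)
           (p^-1 *: Wi) (s *: Wi - (s / p) *: (Wi *m D2 R n)).

Let s_neq0 : s != 0. Proof. by rewrite gt_eqF. Qed.

Let mulVW : Wi *m W = 1%:M.
Proof. by rewrite mulVmx // unitmx_1_subD2 // exprn_gt0. Qed.

Let D2_Wi : D2 R n *m Wi = Wi *m D2 R n.
Proof.
have WD : W *m D2 R n = D2 R n *m W.
  by rewrite mulmxBl mulmxBr mul1mx mulmx1 -scalemxAl -scalemxAr.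
rewrite -[D2 R n *m Wi]mul1mx -{1}mulVW -!mulmxA (mulmxA W) WD -mulmxA.
rewrite mulmxV ?mulmx1 //.
by rewrite unitmx_1_subD2 // exprn_gt0.
Qed.

Lemma wave_kalman_sol_gain : wave_kalman_sol *m (Cmat n p)^T *m W = col_mx s%:M 1%:M.
Proof.
rewrite /wave_kalman_sol /Cmat tr_row_mx trmx0 tr_scalar_mx mul_block_col.
rewrite !mulmx0 !addr0 !mul_mx_scalar mul_col_mx -!scalemxAl mulVW !scalerA.
by rewrite !scale_scalar_mx !mulr1; congr (col_mx _%:M _%:M); field.
Qed.

Local Notation H := ((Cmat n p)^T *m W *m Cmat n p).

Lemma dual_riccati_wave_kalman_sol :
  dual_riccati (Amat R n) H (Bmat R n *m (Bmat R n)^T) wave_kalman_sol = 0.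
Proof.
rewrite /dual_riccati !mulmxA wave_kalman_sol_gain.
rewrite /wave_kalman_sol /Cmat /Amat /Bmat tr_block_mx !trmx0 trmx1 tr_D2 tr_col_mx.
rewrite !trmx0 trmx1 !mul_col_row !mulmx_block.
rewrite !mul0mx !mulmx0 !mul1mx !mulmx1 ?add0r ?addr0 ?mul_mx_scalar ?mul_scalar_mx.
rewrite -!scalemxAr -?scalemxAl D2_Wi.
have WiE : Wi - s ^+ 2 *: (Wi *m D2 R n) = 1%:M.
  by rewrite -[in RHS]mulVW mulmxBr mulmx1 scalemxAr.
move: (Wi) (Wi *m D2 R n) WiE => X V <-.
rewrite !mul0mx !mul_scalar_mx !opp_block_mx !add_block_mx -block_mx0.
by congr block_mx; apply/matrixP => i j; rewrite !mxE; field.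
Qed.

Lemma wave_kalman_closed_loop :
  Amat R n - wave_kalman_sol *m H = block_mx (- (s * p))%:M 1%:M (D2 R n - p%:M) 0.
Proof.
rewrite !mulmxA wave_kalman_sol_gain /Cmat /Amat mul_col_row !mulmx0 -!scalar_mxM.
by rewrite opp_block_mx add_block_mx !oppr0 !addr0 add0r raddfN mul1r.
Qed.

End WaveKalman.

Lemma wave_kalman_gain (R : realType) n (Pi1 Pi4 : R) (S : 'M[R]_(n + n)) :
  0 < Pi4 -> Pi1 = 2 / Pi4 ->
  kalman_are_sol (Amat R n) (Bmat R n) (Cmat n Pi4) (1%:M - Pi1 *: D2 R n) S ->
  kalman_gain (Cmat n Pi4) (1%:M - Pi1 *: D2 R n) S = col_mx (Num.sqrt Pi1)%:M 1%:M.
Proof.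
move=> Pi4_gt0 Pi1E [[symS _] S0 hurS]; set s := Num.sqrt Pi1.
have Pi1_gt0 : 0 < Pi1 by rewrite Pi1E divr_gt0.
have s_gt0 : 0 < s by rewrite sqrtr_gt0.
have s2E : s ^+ 2 = Pi1 by rewrite sqr_sqrtr // ltW.
have Pi4E : Pi4 = 2 / s ^+ 2 by rewrite s2E Pi1E; field; rewrite gt_eqF.
rewrite -s2E Pi4E in S0 hurS *.
pose H := (Cmat n (2 / s ^+ 2))^T *m (1%:M - s ^+ 2 *: D2 R n) *m Cmat n (2 / s ^+ 2).
have -> : S = wave_kalman_sol n s.
  apply: (@dual_riccati_unique R _ (Amat R n) H (Bmat R n *m (Bmat R n)^T) _ _ symS).
  - by rewrite /H !trmx_mul trmxK linearB /= trmx1 linearZ /= tr_D2 mulmxA.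
  - by rewrite /dual_riccati /H !mulmxA.
  - exact: dual_riccati_wave_kalman_sol.
  - by rewrite /H !mulmxA.
  rewrite wave_kalman_closed_loop //.
  apply: hurwitz_damped_oscillator_dual; first exact: D2_eigenvalue_le0.
    by rewrite divr_gt0 ?exprn_gt0.
  by rewrite mulr_gt0 ?divr_gt0 ?exprn_gt0.
exact: wave_kalman_sol_gain.
Qed.

Unset Implicit Arguments.

Theorem mainTheorem4 (R : realType) (n : nat) (hn : (2 <= n)%N)
  (c dx alpha q1 q2 r sm sd : R)
  (hc : 0 < c) (hdx : 0 < dx) (halpha : 0 < alpha) (hq1 : 0 < q1) (hq2 : 0 < q2)
  (hr : 0 < r) (hsm : 0 < sm) (hsd : 0 < sd)
  (P S : 'M[R]_(n + n)) :
  let Pi1 := alpha ^+ 2 / dx ^+ 2 in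
  let Pi2 := c ^+ 2 * q1 ^+ 2 / (q2 ^+ 2 * dx ^+ 2) in
  let Pi3 := dx ^+ 2 * r / (c ^+ 2 * q1) in
  let Pi4 := dx ^+ 2 * sd / (c ^+ 2 * sm) in
  let A := Amat R n in
  let B := Bmat R n in
  let C := Cmat n Pi4 in
  let Q := block_mx (1%:M - Pi1 *: D2 R n) 0 0 (Pi2%:M) in
  let Rw := (Pi3 ^- 2)%:M : 'M[R]_n in
  let W := 1%:M - Pi1 *: D2 R n in
  lqr_are_sol A B Q Rw P ->
  kalman_are_sol A B C W S ->
  q1 = sm -> r = sd -> Pi1 = 2 / Pi4 ->
  let K := lqr_gain B Rw P in
  let L := kalman_gain C W S in
  [/\ diagonal (lsubmx K), diagonal (rsubmx K),
      diagonal (usubmx L) & diagonal (dsubmx L)].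
Proof.
move=> Pi1 Pi2 Pi3 Pi4 A B C Q Rw W hP hS q1E rE Pi1E K L.
have Pi4_gt0 : 0 < Pi4 by rewrite divr_gt0 ?mulr_gt0 ?exprn_gt0.
have Pi2_gt0 : 0 < Pi2 by rewrite divr_gt0 ?mulr_gt0 ?exprn_gt0.
have Pi3E : Pi3 = Pi4 by rewrite /Pi3 /Pi4 q1E rE.
have -> : K = row_mx Pi3%:M (Num.sqrt (Pi3 ^+ 2 * Pi2 + 2 * Pi3))%:M.
  by apply: wave_lqr_gain hP; rewrite ?Pi3E.
have -> : L = col_mx (Num.sqrt Pi1)%:M 1%:M by apply: wave_kalman_gain hS.
by rewrite row_mxKl row_mxKr col_mxKu col_mxKd; split; apply: diagonal_scalar_mx.
Qed.
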